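(* Let $A$ be a Noetherian commutative ring with identity, let $A[\mathbf{x}]=A[x_1,\ldots,x_n]$ be equipped with a monomial order, let $I\subset A[\mathbf{x}]$ be an ideal, let $X=\mathrm{Spec}(A/(I\cap A))$ and $Y=\mathrm{Spec}(A[\mathbf{x}]/I)$. If $I\cap A$ is a prime ideal and each coefficient ideal $\mathrm{in}(I)_{x_i}\neq I\cap A$ ($i=1,\ldots,n$), then the morphism of schemes $Y\to X$ induced by $A/(I\cap A)\to A[\mathbf{x}]/I$ is an isomorphism over a nonempty open subset of $X$.
   Context: A monomial order $>$ is a total order on monomials such that $\mathbf{x}^E>\mathbf{x}^F$ implies $\mathbf{x}^G\mathbf{x}^E>\mathbf{x}^G\mathbf{x}^F$, and $x_i>1$ for each $i$. $\mathrm{in}(f)$ is the greatest term $c\,\mathbf{x}^E$ ($c\neq0$) of a nonzero polynomial $f$; $\mathrm{in}(I)$ is the ideal generated by all $\mathrm{in}(f)$, $f\in I$. For an ideal $J\subset A[\mathbf{x}]$ and monomial $\mathbf{x}^E$, the coefficient ideal is $J_{\mathbf{x}^E}=(c\in A\mid c\,\mathbf{x}^E\in J)\subset A$; $J_{x_i}$ is the coefficient ideal for the monomial $x_i$. *)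

From HB Require Import structures.
From mathcomp Require Import all_boot all_order all_algebra.
From mathcomp Require Import mpoly.
Set Implicit Arguments. Unset Strict Implicit. Unset Printing Implicit Defensive.
Import Order.TTheory GRing.Theory.
Local Open Scope ring_scope.

Definition is_ideal (R : comNzRingType) (I : R -> Prop) : Prop :=
  [/\ I 0,
      (forall x y, I x -> I y -> I (x + y)) &
      (forall r x, I x -> I (r * x))].

Definition is_prime_ideal (R : comNzRingType) (P : R -> Prop) : Prop :=
  [/\ is_ideal P, ~ P 1 &
      (forall a b, P (a * b) -> P a \/ P b)].

Definition ideal_gen (R : comNzRingType) (S : R -> Prop) : R -> Prop :=
  fun x => exists (k : nat) (r s : 'I_k -> R),
    (forall i, S (s i)) /\ x = \sum_(i < k) r i * s i.

Definition noetherian (R : comNzRingType) : Prop :=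
  forall I : R -> Prop, is_ideal I ->
    exists s : seq R, forall x, I x <-> ideal_gen (fun y => y \in s) x.

Definition monomial_order (n : nat) (le : rel 'X_{1..n}) : Prop :=
  (forall E, le E E) /\
  [/\ (forall E F, le E F -> le F E -> E = F),
      (forall E F G, le E F -> le F G -> le E G),
      (forall E F, le E F || le F E),
      (forall E F G, le F E -> E != F -> le (G + F)%MM (G + E)%MM && ((G + E)%MM != (G + F)%MM)) &
      (forall i : 'I_n, le 0%MM (mnm1 i) && ((mnm1 i) != 0%MM))].

Definition initial_term (A : comNzRingType) (n : nat) (le : rel 'X_{1..n})
    (f t : {mpoly A[n]}) : Prop :=
  f != 0 /\ exists E, [/\ E \in msupp f,
      (forall F, F \in msupp f -> le F E) & t = f@_E *: 'X_[E]].

Definition initial_ideal (A : comNzRingType) (n : nat) (le : rel 'X_{1..n})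
    (I : {mpoly A[n]} -> Prop) : {mpoly A[n]} -> Prop :=
  ideal_gen (fun t => exists f, I f /\ initial_term le f t).

Definition coeff_ideal (A : comNzRingType) (n : nat) (J : {mpoly A[n]} -> Prop)
    (E : 'X_{1..n}) : A -> Prop :=
  fun c => J (c *: 'X_[E]).

Definition contraction (A : comNzRingType) (n : nat) (I : {mpoly A[n]} -> Prop) :
  A -> Prop := fun a => I a%:MP.

(* Y = Spec(A[x]/I) -> X = Spec(A/P), P = I \cap A, is an isomorphism over the
   basic open D(f) of X, i.e. the induced ring map
     (A/P)_f --> (A[x]/I)_f
   is bijective. Written out elementwise:
   - injective: a/f^k maps to 0 iff f^m a in I for some m; then a/f^k = 0 in
     (A/P)_f, i.e. f^m' a in P for some m';
   - surjective: every g/f^j is the image of some a/f^k, i.e.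
     f^m (f^k g - f^j a) in I for some m. *)
Definition iso_over_basic_open (A : comNzRingType) (n : nat)
    (I : {mpoly A[n]} -> Prop) (f : A) : Prop :=
  (forall a : A, (exists m : nat, I (f ^+ m * a)%:MP) ->
                 exists m : nat, contraction I (f ^+ m * a)) /\
  (forall (g : {mpoly A[n]}) (j : nat), exists (a : A) (k m : nat),
       I ((f ^+ m)%:MP * ((f ^+ k) *: g - (f ^+ j * a)%:MP))).

From HB Require Import structures.
From mathcomp Require Import all_boot all_order all_algebra.
From mathcomp Require Import mpoly.
From mathcomp Require Import ring.
From Stdlib Require Import Classical.
Set Implicit Arguments. Unset Strict Implicit. Unset Printing Implicit Defensive.
Import Order.TTheory GRing.Theory.
Local Open Scope ring_scope.

(* Let P = I ∩ A.  Always P ⊆ in(I)_{x_i}, so the hypothesis yields c ∉ P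
   with c x_i ∈ in(I).  Reading off the x_i-coefficient of c x_i from a
   presentation by initial terms, only initial terms of degree <= 1 can
   contribute, so some g_i ∈ I with all monomials <= x_i has x_i-coefficient
   d_i ∉ P.  Then f = ∏ d_i ∉ P since P is prime.  Over D(f), the relation
   g_i = d_i x_i + (a polynomial in variables smaller than x_i) shows, by
   induction along the order of the variables, that every x_i agrees modulo I
   with an element of A_f; so (A/P)_f -> (A[x]/I)_f is onto, and it is
   injective because P = I ∩ A. *)

Lemma finrel_wf_ind (T : finType) (r : rel T) (Q : T -> Prop) :
  irreflexive r -> transitive r ->
  (forall i, (forall j, r j i -> Q j) -> Q i) -> forall i, Q i.
Proof.
move=> irr_r tr_r IH i.
have lt_card j k : r j k -> (#|[set l | r l j]| < #|[set l | r l k]|)%N.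
  move=> rjk; apply: proper_card; apply/properP; split.
    by apply/subsetP => l; rewrite !inE => rlj; apply: tr_r rlj rjk.
  by exists j; rewrite !inE ?rjk ?irr_r.
move: {2}#|[set k | r k i]| (leqnn #|[set k | r k i]|) => N.
elim: N i => [|N IHN] i leN; apply: IH => j /lt_card lt_ji.
  by have := leq_trans lt_ji leN.
by apply: IHN; rewrite -ltnS; apply: leq_trans lt_ji leN.
Qed.

Section Ideals.
Variables (R : comNzRingType) (I : R -> Prop).
Hypothesis idealI : is_ideal I.

Lemma ideal0 : I 0. Proof. by case: idealI. Qed.

Lemma idealD x y : I x -> I y -> I (x + y).
Proof. by case: idealI => _ + _; apply. Qed.

Lemma idealMl r x : I x -> I (r * x).
Proof. by case: idealI => _ _; apply. Qed.

Lemma idealMr r x : I x -> I (x * r).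
Proof. by rewrite mulrC; apply: idealMl. Qed.

Lemma idealB x y : I x -> I y -> I (x - y).
Proof. by move=> Ix Iy; apply: idealD => //; rewrite -mulN1r; apply: idealMl. Qed.

End Ideals.

Lemma prime_ideal_prodN (R : comNzRingType) (P : R -> Prop) (T : finType)
    (a : T -> R) :
  is_prime_ideal P -> (forall i, ~ P (a i)) -> ~ P (\prod_i a i).
Proof.
case=> _ P1 Pmul Na; apply: (big_ind (fun x => ~ P x)) => // x y Nx Ny.
by case/Pmul.
Qed.

Lemma contraction_ideal (A : comNzRingType) n (I : {mpoly A[n]} -> Prop) :
  is_ideal I -> is_ideal (contraction I).
Proof.
move=> idealI; split=> [|x y|r x]; rewrite /contraction.
- by rewrite rmorph0; apply: ideal0.
- by rewrite rmorphD; apply: idealD.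
- by rewrite rmorphM; apply: idealMl.
Qed.

Lemma lepm_mnm1 n (m : 'X_{1..n}) j : (0 < m j)%N -> (U_(j) <= m)%MM.
Proof. by move=> mj; apply/mnm_lepP => k; rewrite mnm1E; case: eqP => // <-. Qed.

Lemma addm_eq_mnm1 n (m1 m2 : 'X_{1..n}) i :
  (m1 + m2 = U_(i) -> m1 = 0 \/ m1 = U_(i))%MM.
Proof.
move=> m12; have := congr1 mdeg m12; rewrite mdegD mdeg1.
case d1: (mdeg m1) => [|[|//]] d2.
  by left; apply/eqP; rewrite -mdeg_eq0 d1.
have : mdeg m2 == 0%N by move: d2; rewrite add1n => -[->].
by rewrite mdeg_eq0 => /eqP m20; right; rewrite -m12 m20 addm0.
Qed.

Section MonomialOrder.
Variables (n : nat) (le : rel 'X_{1..n}).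
Hypothesis ordle : monomial_order le.

Lemma mord_refl E : le E E. Proof. by case: ordle. Qed.

Lemma mord_anti E F : le E F -> le F E -> E = F.
Proof. by case: ordle => _ [+ _ _ _ _]; apply. Qed.

Lemma mord_trans E F G : le E F -> le F G -> le E G.
Proof. by case: ordle => _ [_ + _ _ _]; apply. Qed.

Lemma mord_add2l G E F : le F E -> le (G + F)%MM (G + E)%MM.
Proof.
move=> FE; have [->|EF] := eqVneq E F; first exact: mord_refl.
by case: ordle => _ [_ _ _ /(_ E F G FE EF)/andP[]].
Qed.

Lemma mord_ge0 E : le 0%MM E.
Proof.
have le0D F G : le 0%MM F -> le 0%MM G -> le 0%MM (F + G)%MM.
  move=> F0 G0; apply: mord_trans G0 _.
  by rewrite -{1}[G]add0m addmC [(F + G)%MM]addmC; apply: mord_add2l.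
have le0U i : le 0%MM U_(i)%MM by case: ordle => _ [_ _ _ _ /(_ i)/andP[]].
rewrite [E]multinomUE_id; apply: (big_ind (le 0%MM)) => [|//|i _].
  exact: mord_refl.
elim: (E i) => [|k IHk]; first exact: mord_refl.
by rewrite mulmS; apply: le0D.
Qed.

Lemma mord_lepm E F : (E <= F)%MM -> le E F.
Proof.
move=> EF; rewrite -(submK EF) addmC -{1}[E]addm0.
by apply: mord_add2l; apply: mord_ge0.
Qed.

Definition supp_below (A : comNzRingType) (g : {mpoly A[n]}) (E : 'X_{1..n}) :=
  forall F, F \in msupp g -> le F E.

Lemma msupp_below0_mpolyC (A : comNzRingType) (g : {mpoly A[n]}) :
  supp_below g 0%MM -> g = (g@_0%MM)%:MP.
Proof.
move=> g_le0; apply/mpolyP => m; rewrite mcoeffC.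
have [->|m_neq0] := eqVneq m 0%MM; first by rewrite mulr1.
rewrite mulr0; apply: memN_msupp_eq0; apply: contra m_neq0 => mg.
by apply/eqP; apply: mord_anti (g_le0 _ mg) (mord_ge0 _).
Qed.

Definition var_lt (j i : 'I_n) := le U_(j)%MM U_(i)%MM && (j != i).

Lemma var_lt_ind (Q : 'I_n -> Prop) :
  (forall i, (forall j, var_lt j i -> Q j) -> Q i) -> forall i, Q i.
Proof.
apply: finrel_wf_ind => [i|j i k /andP[ij ni] /andP[jk _]].
  by rewrite /var_lt eqxx andbF.
rewrite /var_lt (mord_trans ij jk); apply: contra ni => /eqP ik; subst k.
by rewrite -eq_mnm1; apply/eqP; apply: mord_anti.
Qed.

End MonomialOrder.

Section LocallyConstant.
Variables (A : comNzRingType) (n : nat) (I : {mpoly A[n]} -> Prop) (f : A).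
Hypothesis idealI : is_ideal I.

(* [p] agrees modulo [I] with an element of [A_f], i.e. lies in the image of
   [A_f -> (A[x]/I)_f]. *)
Definition loc_const (p : {mpoly A[n]}) :=
  exists N b, I ((f ^+ N)%:MP * p - b%:MP).

Lemma loc_constC c : loc_const c%:MP.
Proof. by exists 0%N, c; rewrite expr0 mpolyC1 mul1r subrr; apply: ideal0. Qed.

Lemma loc_constD p q : loc_const p -> loc_const q -> loc_const (p + q).
Proof.
move=> [N [b Ip]] [M [c Iq]]; exists (N + M)%N, (f ^+ M * b + f ^+ N * c).
have -> : (f ^+ (N + M))%:MP * (p + q) - (f ^+ M * b + f ^+ N * c)%:MP =
    (f ^+ M)%:MP * ((f ^+ N)%:MP * p - b%:MP) +
    (f ^+ N)%:MP * ((f ^+ M)%:MP * q - c%:MP).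
  by rewrite exprD !rmorphD !rmorphM /=; ring.
by apply: idealD => //; apply: idealMl.
Qed.

Lemma loc_constM p q : loc_const p -> loc_const q -> loc_const (p * q).
Proof.
move=> [N [b Ip]] [M [c Iq]]; exists (N + M)%N, (b * c).
have -> : (f ^+ (N + M))%:MP * (p * q) - (b * c)%:MP =
    ((f ^+ N)%:MP * p - b%:MP) * ((f ^+ M)%:MP * q) +
    b%:MP * ((f ^+ M)%:MP * q - c%:MP).
  by rewrite exprD !rmorphM /=; ring.
by apply: idealD => //; [apply: idealMr | apply: idealMl].
Qed.

Lemma loc_const1 : loc_const 1.
Proof. by rewrite -mpolyC1; apply: loc_constC. Qed.

Lemma loc_constX p k : loc_const p -> loc_const (p ^+ k).
Proof.
move=> lp; elim: k => [|k IHk]; first by rewrite expr0; apply: loc_const1.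
by rewrite exprS; apply: loc_constM.
Qed.

Lemma loc_const_mpoly p :
  (forall m j, m \in msupp p -> (0 < m j)%N -> loc_const 'X_j) ->
  loc_const p.
Proof.
move=> lvars; rewrite (mpolyE p) big_seq.
apply: (big_ind loc_const) => [|//|m mp]; first by rewrite -mpolyC0; apply: loc_constC.
  exact: loc_constD.
rewrite -mul_mpolyC; apply: loc_constM; first exact: loc_constC.
rewrite mpolyXE_id; apply: (big_ind loc_const) => [|//|j _].
- exact: loc_const1.
- exact: loc_constM.
have [->|mj] := posnP (m j); first by rewrite expr0; apply: loc_const1.
by apply: loc_constX; apply: lvars mj.
Qed.

Lemma iso_over_basic_open_loc_const :
  (forall g, loc_const g) -> iso_over_basic_open I f.
Proof.
move=> lall; split=> [a [m Ia] | g j]; first by exists m.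
have [N [b Ig]] := lall g; exists b, (N + j)%N, 0%N.
rewrite expr0 mpolyC1 mul1r.
have -> : f ^+ (N + j) *: g - (f ^+ j * b)%:MP =
    (f ^+ j)%:MP * ((f ^+ N)%:MP * g - b%:MP).
  by rewrite -mul_mpolyC exprD !rmorphM /=; ring.
by apply: idealMl.
Qed.

End LocallyConstant.

Section InitialIdeal.
Variables (A : comNzRingType) (n : nat) (le : rel 'X_{1..n}).
Variables (I : {mpoly A[n]} -> Prop).
Hypotheses (ordle : monomial_order le) (idealI : is_ideal I).

Lemma coeff_initial_ideal_term E c :
  I (c *: 'X_[E]) -> coeff_ideal (initial_ideal le I) E c.
Proof.
move=> Iterm; have [->|c_neq0] := eqVneq c 0.
  by exists 0%N, (fun _ => 0), (fun _ => 0); split; [case | rewrite scale0r big_ord0].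
exists 1%N, (fun _ => 1), (fun _ => c *: 'X_[E]); split; last first.
  by rewrite big_ord1 mul1r.
move=> _; exists (c *: 'X_[E]); split => //; split.
  by rewrite -msupp_eq0 msuppMCX.
exists E; rewrite msuppMCX // mem_seq1 eqxx mcoeffZ mcoeffX eqxx mulr1.
by split=> // F; rewrite mem_seq1 => /eqP ->; apply: mord_refl.
Qed.

Lemma contraction_sub_coeff_initial E c :
  contraction I c -> coeff_ideal (initial_ideal le I) E c.
Proof.
move=> Ic; apply: coeff_initial_ideal_term.
by rewrite -mul_mpolyC mulrC; apply: idealMl.
Qed.

(* In a term [r * in(g)], the monomial [x_i] can only come from an initial
   monomial [1] or [x_i]; in the first case [g] is a constant of [I]. *)
Lemma coeff_mnm1_initial_ideal i :
  (forall g, I g -> supp_below le g U_(i) -> contraction I g@_U_(i)) ->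
  forall t, initial_ideal le I t -> contraction I t@_U_(i).
Proof.
move=> below t [k [r [s [in_s ->]]]].
have idealP := contraction_ideal idealI.
rewrite raddf_sum; apply: (big_ind (contraction I)) => [|x y|l _].
- exact: (ideal0 idealP).
- exact: (idealD idealP).
have [g [Ig [_ [E [_ g_le ->]]]]] := in_s l.
rewrite -scalerAr /= mcoeffZ.
have [->|nz] := eqVneq ((r l * 'X_[E])@_U_(i)) 0.
  by rewrite mulr0; apply: ideal0.
apply: idealMr => //.
move: nz; rewrite -mcoeff_msupp (perm_mem (msuppMX _ _)) => /mapP[m _ /esym].
case/addm_eq_mnm1 => [E0 | EU]; last by rewrite EU in g_le *; apply: below.
rewrite E0 in g_le *.
by move: Ig; rewrite {1}(msupp_below0_mpolyC ordle g_le).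
Qed.

Lemma exists_supp_below_mnm1 i :
  (exists c, ~ (coeff_ideal (initial_ideal le I) (mnm1 i) c <-> contraction I c)) ->
  exists g, [/\ I g, ~ contraction I g@_U_(i) & supp_below le g U_(i)].
Proof.
move=> [c Nc]; have Pc_in := @contraction_sub_coeff_initial U_(i) c.
have NPc : ~ contraction I c by move=> Pc; apply: Nc; split=> // _; apply: Pc_in.
have in_c : coeff_ideal (initial_ideal le I) U_(i) c.
  by apply: NNPP => Nin; apply: Nc; split=> [/Nin|/Pc_in].
apply: NNPP => Nex; apply: NPc.
have below g : I g -> supp_below le g U_(i) -> contraction I g@_U_(i).
  by move=> Ig g_le; apply: NNPP => Ng; apply: Nex; exists g.
by have := coeff_mnm1_initial_ideal below in_c; rewrite mcoeffZ mcoeffX eqxx mulr1.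
Qed.

Lemma loc_const_mnm1 (f : A) i g e :
  I g -> supp_below le g U_(i) -> f = g@_U_(i) * e ->
  (forall j, var_lt le j i -> loc_const I f 'X_j) -> loc_const I f 'X_i.
Proof.
move=> Ig g_le fE lower; set d := g@_U_(i); set h := g - d *: 'X_i.
have supp_h m : m \in msupp h -> m \in msupp g /\ m != U_(i)%MM.
  rewrite !mcoeff_msupp mcoeffB mcoeffZ mcoeffX.
  have [->|m_neqU] := eqVneq m U_(i)%MM; first by rewrite mulr1 subrr eqxx.
  by rewrite mulr0 subr0 => ->.
have [N [b Ih]] : loc_const I f h.
  apply: (loc_const_mpoly idealI) => m j /supp_h[mg m_neqU] mj; apply: lower.
  have Uj_le_m := mord_lepm ordle (lepm_mnm1 mj).
  rewrite /var_lt (mord_trans ordle Uj_le_m (g_le _ mg)).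
  apply: contra m_neqU => /eqP ji; subst j.
  by apply/eqP; apply: (mord_anti ordle) (g_le _ mg) Uj_le_m.
exists N.+1, (- (e * b)).
have -> : (f ^+ N.+1)%:MP * 'X_i - (- (e * b))%:MP =
    e%:MP * ((f ^+ N)%:MP * g) - e%:MP * ((f ^+ N)%:MP * h - b%:MP).
  by rewrite /h exprS rmorphM {1}fE rmorphN !rmorphM /= -mul_mpolyC; ring.
by apply: idealB => //; apply: idealMl => //; apply: idealMl.
Qed.

End InitialIdeal.

Theorem corollary5p2 (A : comNzRingType) (n : nat) (le : rel 'X_{1..n})
    (I : {mpoly A[n]} -> Prop) :
  noetherian A ->
  monomial_order le ->
  is_ideal I ->
  is_prime_ideal (contraction I) ->
  (forall i : 'I_n,
     exists c : A, ~ (coeff_ideal (initial_ideal le I) (mnm1 i) c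
                      <-> contraction I c)) ->
  exists f : A, ~ contraction I f /\ iso_over_basic_open I f.
Proof.
move=> _ ordle idealI primeP coeffN.
have /fin_all_exists[g gP] := fun i => exists_supp_below_mnm1 ordle idealI (coeffN i).
pose f := \prod_i (g i)@_U_(i).
have NPf : ~ contraction I f by apply: prime_ideal_prodN => // i; case: (gP i).
exists f; split => //; apply: iso_over_basic_open_loc_const => // p.
apply: loc_const_mpoly => // m j _ _; elim/(var_lt_ind ordle): j => i lower.
have [Ig _ g_le] := gP i.
by apply: loc_const_mnm1 Ig g_le _ lower => //; rewrite /f (bigD1 i).
Qed.
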